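(* Let $n,m\ge 1$, $a\in\mathbb{R}^n$, $d\in\mathbb{R}^m$ with $\|a\|\le\|d\|$ and $m>1$. Let $$H=\{(x,y)\in\mathbb{R}^{n+m} : a^\mathsf{T} x+d^\mathsf{T} y=-1\},\qquad S_{\le 0}=\{(x,y)\in\mathbb{R}^{n+m} : \|x\|\le\|y\|,\ a^\mathsf{T} x+d^\mathsf{T} y\le 0\}.$$ Let $(\bar x,\bar y)\in\mathbb{R}^{n+m}$ satisfy $\|\bar x\|>\|\bar y\|$ and $a^\mathsf{T}\bar x+d^\mathsf{T}\bar y=-1$, and let $\lambda=\bar x/\|\bar x\|$. Define $$G(\lambda)=\{\beta\in\mathbb{R}^m : \|\beta\|=1,\ a^\mathsf{T}\lambda+d^\mathsf{T}\beta\le 0\},\qquad C_{G(\lambda)}=\{(x,y)\in\mathbb{R}^{n+m} : -\lambda^\mathsf{T} x+\beta^\mathsf{T} y\le 0\ \ \forall \beta\in G(\lambda)\}.$$ Then $C_{G(\lambda)}$ is maximal $S_{\le 0}$-free with respect to $H$, and $(\bar x,\bar y)\in\operatorname{int}(C_{G(\lambda)})$.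
   Context: $\|\cdot\|$ is the Euclidean norm. For a closed set $S\subseteq\mathbb{R}^N$, a convex set $C\subseteq\mathbb{R}^N$ is $S$-free if $\operatorname{int}(C)\cap S=\emptyset$. Given an affine hyperplane $H$, a closed convex set $C$ is $S$-free with respect to $H$ if $C\cap H$ is $(S\cap H)$-free with respect to the induced topology of $H$ (i.e. the interior of $C\cap H$ relative to $H$ does not meet $S$); it is maximal $S$-free with respect to $H$ if for every closed convex $C'\supseteq C$ that is $S$-free with respect to $H$ one has $C'\cap H\subseteq C\cap H$. *)

(* R : realType, points of R^N are row vectors 'rV[R]_N,
   a point (x,y) of R^(n+m) is row_mx x y; x = lsubmx p, y = rsubmx p. *)
From HB Require Import structures.
From mathcomp Require Import all_boot all_order all_algebra.
From mathcomp Require Import all_classical all_reals.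
Set Implicit Arguments. Unset Strict Implicit. Unset Printing Implicit Defensive.
Import Order.TTheory GRing.Theory Num.Theory.
Local Open Scope classical_set_scope.
Local Open Scope ring_scope.

Section Defs.
Variable R : realType.

Definition dotv (N : nat) (u v : 'rV[R]_N) : R := \sum_(i < N) u 0 i * v 0 i.
Definition enorm (N : nat) (u : 'rV[R]_N) : R := Num.sqrt (dotv u u).

Definition eball (N : nat) (c : 'rV[R]_N) (r : R) : set 'rV[R]_N :=
  [set p | enorm (p - c) < r].

Definition einterior (N : nat) (A : set 'rV[R]_N) : set 'rV[R]_N :=
  [set p | exists2 r : R, 0 < r & eball p r `<=` A].
Definition eopen (N : nat) (A : set 'rV[R]_N) : Prop := A `<=` einterior A.
Definition eclosed (N : nat) (A : set 'rV[R]_N) : Prop := eopen (~` A).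

Definition convex_set (N : nat) (A : set 'rV[R]_N) : Prop :=
  forall p q (t : R), A p -> A q -> 0 <= t -> t <= 1 -> A (t *: p + (1 - t) *: q).

Definition rel_interior (N : nat) (H A : set 'rV[R]_N) : set 'rV[R]_N :=
  [set p | H p /\ A p /\ exists2 r : R, 0 < r & eball p r `&` H `<=` A].

Definition S_free (N : nat) (S C : set 'rV[R]_N) : Prop := einterior C `&` S = set0.

Definition S_free_wrt (N : nat) (H S C : set 'rV[R]_N) : Prop :=
  rel_interior H (C `&` H) `&` (S `&` H) = set0.

Definition maximal_S_free_wrt (N : nat) (H S C : set 'rV[R]_N) : Prop :=
  [/\ eclosed C, convex_set C, S_free_wrt H S C &
      forall C' : set 'rV[R]_N, eclosed C' -> convex_set C' -> C `<=` C' ->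
        S_free_wrt H S C' -> C' `&` H `<=` C `&` H].

Definition hypH (n m : nat) (a : 'rV[R]_n) (d : 'rV[R]_m) : set 'rV[R]_(n + m) :=
  [set p | dotv a (lsubmx p) + dotv d (rsubmx p) = -1].

Definition S_le0 (n m : nat) (a : 'rV[R]_n) (d : 'rV[R]_m) : set 'rV[R]_(n + m) :=
  [set p | enorm (lsubmx p) <= enorm (rsubmx p) /\
           dotv a (lsubmx p) + dotv d (rsubmx p) <= 0].

Definition Gset (n m : nat) (a : 'rV[R]_n) (d : 'rV[R]_m) (lam : 'rV[R]_n) : set 'rV[R]_m :=
  [set beta | enorm beta = 1 /\ dotv a lam + dotv d beta <= 0].

Definition C_G (n m : nat) (lam : 'rV[R]_n) (G : set 'rV[R]_m) : set 'rV[R]_(n + m) :=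
  [set p | forall beta, G beta -> - dotv lam (lsubmx p) + dotv beta (rsubmx p) <= 0].

End Defs.

(* C_G is an intersection of closed half-spaces -lam^T x + beta^T y <= 0, hence closed
   and convex, and (xb, yb) is interior since -lam^T xb + beta^T yb <= |yb| - |xb| < 0 for
   every unit beta.
   S-freeness: each (x, y) in S ∩ H admits beta in G(lam) with lam^T x <= beta^T y; take
   y / |y| if it lies in G(lam), and otherwise the boundary point of the cap G(lam) in the
   plane of d and y (a planar inequality).  Such a point lies on the boundary of a
   half-space of C_G within H, so it is not relatively interior.
   Maximality: a point q of C' ∩ H outside C_G violates the half-space of some beta; once
   beta is moved into the interior of the cap (d^T beta < -a^T lam), the ray through
   (lam, beta) meets H in a point of S, and the convex hull of C_G and q contains a ball
   around that point, contradicting the S-freeness of C'. *)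

From mathcomp Require Import all_boot all_order all_algebra.
From mathcomp Require Import all_classical all_reals.
From mathcomp Require Import ring lra.
Import Order.TTheory GRing.Theory Num.Theory.
Local Open Scope classical_set_scope.
Local Open Scope ring_scope.

Set Implicit Arguments. Unset Strict Implicit. Unset Printing Implicit Defensive.

Section DotProduct.
Variables (R : realType) (N : nat).
Implicit Types (u v w : 'rV[R]_N) (c : R).

Lemma dotvC u v : dotv u v = dotv v u.
Proof. by apply: eq_bigr => i _; rewrite mulrC. Qed.

Lemma dotvDl u v w : dotv (u + v) w = dotv u w + dotv v w.
Proof. by rewrite /dotv -big_split; apply: eq_bigr => i _; rewrite mxE mulrDl. Qed.

Lemma dotvDr u v w : dotv w (u + v) = dotv w u + dotv w v.
Proof. by rewrite dotvC dotvDl !(dotvC w). Qed.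

Lemma dotvZl c u w : dotv (c *: u) w = c * dotv u w.
Proof. by rewrite /dotv mulr_sumr; apply: eq_bigr => i _; rewrite mxE mulrA. Qed.

Lemma dotvZr c u w : dotv w (c *: u) = c * dotv w u.
Proof. by rewrite dotvC dotvZl dotvC. Qed.

Lemma dotvNl u w : dotv (- u) w = - dotv u w.
Proof. by rewrite -scaleN1r dotvZl mulN1r. Qed.

Lemma dotvNr u w : dotv w (- u) = - dotv w u.
Proof. by rewrite dotvC dotvNl dotvC. Qed.

Lemma dotvBl u v w : dotv (u - v) w = dotv u w - dotv v w.
Proof. by rewrite dotvDl dotvNl. Qed.

Lemma dotvBr u v w : dotv w (u - v) = dotv w u - dotv w v.
Proof. by rewrite dotvDr dotvNr. Qed.

Lemma dotv0l u : dotv 0 u = 0.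
Proof. by rewrite /dotv big1 // => i _; rewrite mxE mul0r. Qed.

Lemma dotv0r u : dotv u 0 = 0.
Proof. by rewrite dotvC dotv0l. Qed.

Lemma dotvv_ge0 u : 0 <= dotv u u.
Proof. by apply: sumr_ge0 => i _; rewrite -expr2 sqr_ge0. Qed.

Lemma dotvv_eq0 u : (dotv u u == 0) = (u == 0).
Proof.
apply/eqP/eqP => [uu0|->]; last exact: dotv0l.
apply/matrixP => i j; rewrite mxE (ord1 i).
have sq_ge0 k : 0 <= u 0 k * u 0 k by rewrite -expr2 sqr_ge0.
have /eqP := psumr_eq0P (fun k _ => sq_ge0 k) uu0 (i := j) isT.
by rewrite mulf_eq0 orbb => /eqP.
Qed.

Lemma dotvv_gt0 u : (0 < dotv u u) = (u != 0).
Proof. by rewrite lt0r dotvv_ge0 dotvv_eq0 andbT. Qed.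

Lemma enorm_ge0 u : 0 <= enorm u.
Proof. exact: sqrtr_ge0. Qed.

Lemma enorm_sqr u : enorm u ^+ 2 = dotv u u.
Proof. by rewrite sqr_sqrtr // dotvv_ge0. Qed.

Lemma enorm_eq0 u : (enorm u == 0) = (u == 0).
Proof. by rewrite -dotvv_eq0 -enorm_sqr sqrf_eq0. Qed.

Lemma enorm_gt0 u : (0 < enorm u) = (u != 0).
Proof. by rewrite lt0r enorm_ge0 enorm_eq0 andbT. Qed.

Lemma enorm0 : enorm (0 : 'rV[R]_N) = 0.
Proof. by apply/eqP; rewrite enorm_eq0. Qed.

Lemma enorm_eq1 u : (enorm u = 1) <-> (dotv u u = 1).
Proof.
by split=> [u1|uu1]; [rewrite -enorm_sqr u1 expr1n | rewrite /enorm uu1 sqrtr1].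
Qed.

Lemma enormZ c u : enorm (c *: u) = `|c| * enorm u.
Proof. by rewrite /enorm dotvZl dotvZr mulrA -expr2 sqrtrM ?sqr_ge0 // sqrtr_sqr. Qed.

Lemma enorm_normalize u : u != 0 -> enorm ((enorm u)^-1 *: u) = 1.
Proof.
move=> u0; rewrite enormZ ger0_norm ?invr_ge0 ?enorm_ge0 // mulVf //.
by rewrite enorm_eq0.
Qed.

Lemma dotv_sqr_le u v : dotv u v ^+ 2 <= dotv u u * dotv v v.
Proof.
have [->|v0] := eqVneq v 0; first by rewrite !dotv0r expr0n mulr0.
have vv_gt0 : 0 < dotv v v by rewrite dotvv_gt0.
set t := dotv u v / dotv v v.
have := dotvv_ge0 (u - t *: v).
rewrite !(dotvBl, dotvBr, dotvZl, dotvZr) (dotvC v u).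
have -> : dotv u u - t * dotv u v - t * (dotv u v - t * dotv v v)
    = (dotv u u * dotv v v - dotv u v ^+ 2) / dotv v v.
  by rewrite /t; field; rewrite gt_eqF.
by rewrite pmulr_lge0 ?invr_gt0 // subr_ge0.
Qed.

Lemma normr_dotv_le u v : `|dotv u v| <= enorm u * enorm v.
Proof.
rewrite -sqrtrM ?dotvv_ge0 // -sqrtr_sqr ler_sqrt ?mulr_ge0 ?dotvv_ge0 //.
exact: dotv_sqr_le.
Qed.

Lemma dotv_le u v : dotv u v <= enorm u * enorm v.
Proof. exact: le_trans (ler_norm _) (normr_dotv_le u v). Qed.

Lemma dotv_ge u v : - (enorm u * enorm v) <= dotv u v.
Proof.
rewrite lerNl -dotvNl; apply: le_trans (dotv_le _ _) _.
by rewrite -scaleN1r enormZ normrN1 mul1r.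
Qed.

Lemma dotv_ge_amgm k u v : 0 < k -> - ((k * dotv u u + dotv v v / k) / 2) <= dotv u v.
Proof.
move=> k_gt0; have := dotvv_ge0 (k *: u + v).
rewrite !(dotvDl, dotvDr, dotvZl, dotvZr) (dotvC v u) => h.
have : 0 <= (k * (k * dotv u u) + k * dotv u v + (k * dotv u v + dotv v v)) / (2 * k).
  by rewrite divr_ge0 // mulr_ge0 // ltW.
have -> : (k * (k * dotv u u) + k * dotv u v + (k * dotv u v + dotv v v)) / (2 * k)
    = (k * dotv u u + dotv v v / k) / 2 + dotv u v by field; rewrite gt_eqF.
lra.
Qed.

Lemma dotv_delta u j : dotv u (delta_mx 0 j) = u 0 j.
Proof.
rewrite /dotv (bigD1 j) //= big1 ?addr0; first by rewrite mxE !eqxx mulr1.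
by move=> i /negbTE ij; rewrite mxE ij andbF mulr0.
Qed.

Lemma exists_unit_orthogonal v : (1 < N)%N ->
  exists w, enorm w = 1 /\ dotv v w = 0.
Proof.
move=> N_gt1; have N_gt0 : (0 < N)%N by apply: ltnW.
pose i0 := Ordinal N_gt0; pose i1 := Ordinal N_gt1.
have i01 : (i0 == i1) = false by [].
pose w := v 0 i1 *: delta_mx 0 i0 - v 0 i0 *: delta_mx 0 i1 : 'rV[R]_N.
have vw0 : dotv v w = 0.
  by rewrite !(dotvBr, dotvZr, dotv_delta) mulrC subrr.
have [w0|wn0] := eqVneq w 0.
  have : dotv w (delta_mx 0 i0) = 0 by rewrite w0 dotv0l.
  rewrite dotv_delta !mxE !eqxx i01 /= mulr1 mulr0 subr0 => v1.
  exists (delta_mx 0 i1); split; last by rewrite dotv_delta.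
  by apply/enorm_eq1; rewrite dotv_delta mxE !eqxx.
exists ((enorm w)^-1 *: w); split; first exact: enorm_normalize.
by rewrite dotvZr vw0 mulr0.
Qed.

End DotProduct.

Lemma ler_sqr_nneg (R : realDomainType) (x z : R) :
  0 <= x -> 0 <= z -> (x ^+ 2 <= z ^+ 2) = (x <= z).
Proof. by move=> x_ge0 z_ge0; rewrite ler_sqr. Qed.

Lemma planar_cauchy_schwarz (R : realFieldType) (x1 x2 z1 z2 X Z : R) :
  0 <= X -> 0 <= Z -> x1 ^+ 2 + x2 ^+ 2 <= X ^+ 2 -> z1 ^+ 2 + z2 ^+ 2 <= Z ^+ 2 ->
  x1 * z1 + x2 * z2 <= X * Z.
Proof.
move=> X_ge0 Z_ge0 xX zZ.
have [|s_gt0] := lerP (x1 * z1 + x2 * z2) 0; first by move/le_trans; apply; rewrite mulr_ge0.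
rewrite -ler_sqr_nneg ?mulr_ge0 ?(ltW s_gt0) // exprMn.
have lagrange : (x1 * z1 + x2 * z2) ^+ 2 + (x1 * z2 - x2 * z1) ^+ 2
    = (x1 ^+ 2 + x2 ^+ 2) * (z1 ^+ 2 + z2 ^+ 2) by ring.
have : (x1 ^+ 2 + x2 ^+ 2) * (z1 ^+ 2 + z2 ^+ 2) <= X ^+ 2 * Z ^+ 2.
  by rewrite ler_pM ?addr_ge0 ?sqr_ge0.
have := sqr_ge0 (x1 * z2 - x2 * z1); lra.
Qed.

(* Coordinates in the plane spanned by d / |d| and a unit f orthogonal to d: (ye, yf) are
   those of y, (- mu, r) / D is the boundary point of the cap G(lam) (mu = a^T lam,
   D = |d|), and t, W are the components of x along lam and orthogonal to it. *)
Section Planar.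
Variables (R : realFieldType) (D mu r ye yf Y : R).
Hypotheses (D_gt0 : 0 < D) (r_ge0 : 0 <= r) (rmuD : r ^+ 2 + mu ^+ 2 = D ^+ 2).
Hypotheses (yf_ge0 : 0 <= yf) (Y_ge0 : 0 <= Y) (yY : ye ^+ 2 + yf ^+ 2 = Y ^+ 2).
Hypothesis outside_cap : - mu * Y < D * ye.

Lemma planar_rotated_ge0 : 0 <= r * ye + mu * yf.
Proof.
have D_ge0 := ltW D_gt0.
have cap := outside_cap; rewrite mulNr in cap.
have cross : r ^+ 2 * ye ^+ 2 - mu ^+ 2 * yf ^+ 2 = D ^+ 2 * ye ^+ 2 - mu ^+ 2 * Y ^+ 2.
  by rewrite -rmuD -yY; ring.
have [mu_ge0|mu_lt0] := lerP 0 mu.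
  have [ye_ge0|ye_lt0] := lerP 0 ye; first by rewrite addr_ge0 ?mulr_ge0.
  have mye_ge0 : 0 <= - ye by lra.
  have : (D * - ye) ^+ 2 <= (mu * Y) ^+ 2.
    by rewrite ler_sqr_nneg ?mulr_ge0 // ?mulrN; lra.
  rewrite !exprMn sqrrN => DY.
  have : r * - ye <= mu * yf by rewrite -ler_sqr_nneg ?mulr_ge0 // !exprMn sqrrN; lra.
  by rewrite mulrN; lra.
have ye_gt0 : 0 < ye.
  by rewrite -(pmulr_rgt0 _ D_gt0); apply: le_lt_trans cap; rewrite oppr_ge0 nmulr_rle0.
have mmu_ge0 : 0 <= - mu by lra.
have ye_ge0 := ltW ye_gt0.
have : (- mu * Y) ^+ 2 <= (D * ye) ^+ 2.
  by rewrite ler_sqr_nneg ?mulr_ge0 // ?mulNr; lra.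
rewrite !exprMn sqrrN => DY.
have : - mu * yf <= r * ye by rewrite -ler_sqr_nneg ?mulr_ge0 // !exprMn sqrrN; lra.
by rewrite mulNr; lra.
Qed.

Variables (t W : R).
Hypotheses (tWY : t ^+ 2 + W ^+ 2 <= Y ^+ 2) (in_halfplane : D * ye <= - mu * t + r * W).

Lemma planar_cap_edge_degenerate : yf = 0 -> D * t <= - mu * ye + r * yf.
Proof.
move=> yf0; have D_ge0 := ltW D_gt0.
have mu_le_D : mu <= D.
  apply: le_trans (ler_norm mu) _.
  rewrite -ler_sqr_nneg ?normr_ge0 // real_normK ?num_real //.
  by rewrite -rmuD ler_wpDl ?sqr_ge0.
have ye_eqY : ye = Y.
  have : (ye - Y) * (ye + Y) = 0 by rewrite -subr_sqr -yY yf0; ring.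
  move/eqP; rewrite mulf_eq0 subr_eq0 addr_eq0 => /orP[/eqP // | /eqP yeNY].
  have : 0 <= (D - mu) * Y by rewrite mulr_ge0 // subr_ge0.
  by move: outside_cap; rewrite yeNY; lra.
have halfplane_Y : D ^+ 2 * Y ^+ 2 <= (D * Y) * (- mu * t + r * W).
  by rewrite -exprMn expr2 -{2}ye_eqY ler_wpM2l ?mulr_ge0.
have disc : D ^+ 2 * (t ^+ 2 + W ^+ 2) <= D ^+ 2 * Y ^+ 2 by rewrite ler_wpM2l ?sqr_ge0.
have sum_sqr : (D * t + mu * Y) ^+ 2 + (D * W - r * Y) ^+ 2
    = D ^+ 2 * (t ^+ 2 + W ^+ 2) - 2 * ((D * Y) * (- mu * t + r * W))
      + (r ^+ 2 + mu ^+ 2) * Y ^+ 2 by ring.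
rewrite rmuD in sum_sqr.
have /eqP : (D * t + mu * Y) ^+ 2 = 0.
  by apply/le_anti; rewrite sqr_ge0 andbT; have := sqr_ge0 (D * W - r * Y); lra.
by rewrite sqrf_eq0 yf0 ye_eqY => /eqP; lra.
Qed.

Lemma planar_cap_edge : D * t <= - mu * ye + r * yf.
Proof.
have [yf0|yf_neq0] := eqVneq yf 0; first exact: planar_cap_edge_degenerate.
have yf_gt0 : 0 < yf by rewrite lt0r yf_neq0.
set G := - mu * ye + r * yf; set V := r * ye + mu * yf.
have V_ge0 : 0 <= V := planar_rotated_ge0.
have GV : G ^+ 2 + V ^+ 2 = (D * Y) ^+ 2 by rewrite /G /V exprMn -yY -rmuD; ring.
have tWGV : t * G + W * V <= Y * (D * Y).
  by apply: planar_cauchy_schwarz; rewrite ?GV ?mulr_ge0 // ltW.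
have id_t : D ^+ 2 * yf * t = r * (t * G + W * V) - V * (- mu * t + r * W).
  by rewrite /G /V -rmuD; ring.
have id_G : r * Y ^+ 2 - V * ye = yf * G by rewrite /G /V -yY; ring.
have : D * yf * (D * t) <= D * yf * G.
  have -> : D * yf * (D * t) = D ^+ 2 * yf * t by ring.
  have -> : D * yf * G = r * (Y * (D * Y)) - V * (D * ye) by rewrite -mulrA -id_G; ring.
  have := ler_wpM2l r_ge0 tWGV; have := ler_wpM2l V_ge0 in_halfplane.
  by rewrite id_t; lra.
by rewrite ler_pM2l // mulr_gt0.
Qed.

End Planar.

Section Blocks.
Variables (R : realType) (n m : nat).
Implicit Types (lam : 'rV[R]_n) (beta : 'rV[R]_m) (p z : 'rV[R]_(n + m)).

Lemma dotv_row_mx (u : 'rV[R]_n) (v : 'rV[R]_m) p :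
  dotv (row_mx u v) p = dotv u (lsubmx p) + dotv v (rsubmx p).
Proof.
rewrite /dotv big_split_ord /=.
by congr (_ + _); apply: eq_bigr => i _; rewrite ?row_mxEl ?row_mxEr !mxE.
Qed.

Definition cone_normal lam beta : 'rV[R]_(n + m) := row_mx (- lam) beta.

Lemma dotv_cone_normal lam beta p :
  dotv (cone_normal lam beta) p = - dotv lam (lsubmx p) + dotv beta (rsubmx p).
Proof. by rewrite dotv_row_mx dotvNl. Qed.

Lemma enorm_cone_normal lam beta :
  enorm lam = 1 -> enorm beta = 1 -> enorm (cone_normal lam beta) <= 2.
Proof.
move=> /enorm_eq1 lam1 /enorm_eq1 beta1.
rewrite -ler_sqr_nneg ?enorm_ge0 // enorm_sqr dotv_row_mx row_mxKl row_mxKr.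
by rewrite dotvNl dotvNr opprK lam1 beta1; lra.
Qed.

Lemma dotv_cone_normal_le lam beta z :
  enorm lam = 1 -> enorm beta = 1 -> dotv (cone_normal lam beta) z <= 2 * enorm z.
Proof.
move=> lam1 beta1; apply: le_trans (dotv_le _ _) _.
by rewrite ler_wpM2r ?enorm_ge0 ?enorm_cone_normal.
Qed.

End Blocks.

Section OrthogonalSplit.
Variables (R : realType) (N : nat).
Implicit Types (e a x y : 'rV[R]_N).

Lemma dotv_orth_split e a x : enorm e = 1 ->
  dotv a x = dotv a e * dotv e x + dotv (a - dotv a e *: e) (x - dotv e x *: e).
Proof.
move=> /enorm_eq1 e1.
by rewrite !(dotvBl, dotvBr, dotvZl, dotvZr) e1; ring.
Qed.

Lemma dotv_orth_sqr e x : enorm e = 1 ->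
  dotv e x ^+ 2 + dotv (x - dotv e x *: e) (x - dotv e x *: e) = dotv x x.
Proof. by move=> e1; rewrite (dotv_orth_split x x e1) (dotvC x e) expr2. Qed.

Lemma dotv_ge_orth e a x : enorm e = 1 ->
  dotv a e * dotv e x - Num.sqrt (dotv a a - dotv a e ^+ 2) * enorm (x - dotv e x *: e)
    <= dotv a x.
Proof.
move=> e1; rewrite (dotv_orth_split a x e1) lerD2l.
have <- : enorm (a - dotv a e *: e) = Num.sqrt (dotv a a - dotv a e ^+ 2).
  by rewrite -(dotv_orth_sqr a e1) (dotvC e a) addrAC subrr add0r.
exact: dotv_ge.
Qed.

Lemma exists_orthogonal_split e y : (1 < N)%N -> enorm e = 1 ->
  exists f, [/\ enorm f = 1, dotv e f = 0, 0 <= dotv f y &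
                dotv e y ^+ 2 + dotv f y ^+ 2 = dotv y y].
Proof.
move=> N_gt1 e1; have /enorm_eq1 ee1 := e1.
set y' := y - dotv e y *: e.
have yy : dotv y y = dotv e y ^+ 2 + dotv y' y' by rewrite dotv_orth_sqr.
have ey' : dotv e y' = 0 by rewrite dotvBr dotvZr ee1 mulr1 subrr.
have y'y : dotv y' y = dotv y' y'.
  by rewrite -{1}(subrK (dotv e y *: e) y) -/y' dotvDr dotvZr (dotvC y' e) ey' mulr0 addr0.
have [y'0|y'n0] := eqVneq y' 0.
  have [f [f1 ef]] := exists_unit_orthogonal e N_gt1.
  have fy : dotv f y = 0.
    by rewrite -(subrK (dotv e y *: e) y) -/y' y'0 add0r dotvZr (dotvC f e) ef mulr0.
  by exists f; split; rewrite // ?fy // yy y'0 dotv0l expr0n addr0.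
have y'_gt0 : 0 < enorm y' by rewrite enorm_gt0.
exists ((enorm y')^-1 *: y'); split; first exact: enorm_normalize.
- by rewrite dotvZr ey' mulr0.
- by rewrite dotvZl y'y -enorm_sqr mulr_ge0 ?invr_ge0 ?enorm_ge0 ?sqr_ge0.
- rewrite dotvZl y'y yy -enorm_sqr; congr (_ + _).
  by field; rewrite gt_eqF.
Qed.

End OrthogonalSplit.

Section CapWitness.
Variables (R : realType) (n m : nat) (a : 'rV[R]_n) (d : 'rV[R]_m) (lam : 'rV[R]_n).

Lemma Gset_normalize y : dotv d y <= - dotv a lam * enorm y -> y != 0 ->
  Gset a d lam ((enorm y)^-1 *: y).
Proof.
move=> dy y0; split; first exact: enorm_normalize.
have Y_gt0 : 0 < enorm y by rewrite enorm_gt0.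
have : (enorm y)^-1 * dotv d y <= (enorm y)^-1 * (- dotv a lam * enorm y).
  by rewrite ler_wpM2l // invr_ge0 ltW.
by rewrite dotvZr mulrCA mulVf ?gt_eqF // mulr1; lra.
Qed.

Lemma Gset_boundary f r : 0 < enorm d -> enorm f = 1 -> dotv d f = 0 ->
  r ^+ 2 + dotv a lam ^+ 2 = enorm d ^+ 2 ->
  Gset a d lam ((- dotv a lam / enorm d ^+ 2) *: d + (r / enorm d) *: f).
Proof.
set D := enorm d; set mu := dotv a lam.
move=> D_gt0 /enorm_eq1 f1 df rmuD; have dd : dotv d d = D ^+ 2 by rewrite enorm_sqr.
split.
  apply/enorm_eq1; apply: (@eq_trans _ _ ((r ^+ 2 + mu ^+ 2) / D ^+ 2)).
    rewrite !(dotvDl, dotvDr, dotvZl, dotvZr) dd f1 df (dotvC f d) df.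
    by field; rewrite gt_eqF.
  by rewrite rmuD divff // expf_neq0 ?gt_eqF.
rewrite !(dotvDr, dotvZr) dd df mulr0 addr0 mulfVK ?expf_neq0 ?gt_eqF //.
by rewrite addrN.
Qed.

Hypotheses (m_gt1 : (1 < m)%N) (ad : enorm a <= enorm d) (lam1 : enorm lam = 1).

Lemma hypH_enorm_gt0 x y : dotv a x + dotv d y = -1 -> 0 < enorm d.
Proof.
move=> Hxy; rewrite enorm_gt0; apply: contra_eq_neq Hxy => d0.
have /eqP a0 : a == 0 by rewrite -enorm_eq0 eq_le enorm_ge0 -(enorm0 R m) -d0 ad.
by rewrite a0 d0 !dotv0l addr0 eq_sym oppr_eq0 oner_eq0.
Qed.

Lemma Gset_witness_outside_cap x y : 0 < enorm d -> enorm x <= enorm y ->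
  dotv a x + dotv d y <= 0 -> - dotv a lam * enorm y < dotv d y ->
  exists2 beta, Gset a d lam beta & dotv lam x <= dotv beta y.
Proof.
set D := enorm d; set mu := dotv a lam; set Y := enorm y; set t := dotv lam x.
move=> D_gt0 xY Hxy outside_cap.
have muD : mu ^+ 2 <= D ^+ 2.
  rewrite -real_normK ?num_real // ler_sqr_nneg ?enorm_ge0 //.
  by apply: le_trans (normr_dotv_le a lam) _; rewrite lam1 mulr1.
set r := Num.sqrt (D ^+ 2 - mu ^+ 2).
have rmuD : r ^+ 2 + mu ^+ 2 = D ^+ 2 by rewrite sqr_sqrtr ?subr_ge0 // subrK.
set W := enorm (x - t *: lam).
have a_lower : mu * t - r * W <= dotv a x.
  apply: le_trans (dotv_ge_orth a x lam1); rewrite -/mu -/t -/W lerD2l lerN2.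
  rewrite ler_wpM2r ?enorm_ge0 // ler_sqrt; last by rewrite subr_ge0.
  by rewrite lerD2r -enorm_sqr ler_sqr_nneg ?enorm_ge0.
have tWY : t ^+ 2 + W ^+ 2 <= Y ^+ 2.
  by rewrite /W enorm_sqr dotv_orth_sqr // -enorm_sqr ler_sqr_nneg ?enorm_ge0.
have d0 : d != 0 by rewrite -enorm_gt0.
have [f [f1 ef yf_ge0 yy]] := exists_orthogonal_split y m_gt1 (enorm_normalize d0).
rewrite dotvZl in ef; rewrite dotvZl in yy; set ye := D^-1 * dotv d y in yy.
have df : dotv d f = 0 by move/eqP: ef; rewrite mulf_eq0 invr_eq0 gt_eqF //= => /eqP.
have Dye : D * ye = dotv d y by rewrite /ye mulrA mulfV ?gt_eqF ?mul1r.
have edge : D * t <= - mu * ye + r * dotv f y.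
  apply: (planar_cap_edge D_gt0 (sqrtr_ge0 _) rmuD yf_ge0 (enorm_ge0 y)).
  - by rewrite yy enorm_sqr.
  - by rewrite Dye.
  - exact: tWY.
  - by rewrite Dye -/r; lra.
exists ((- mu / D ^+ 2) *: d + (r / D) *: f); first exact: Gset_boundary.
rewrite !(dotvDl, dotvZl) -Dye -(ler_pM2l D_gt0).
by rewrite [X in _ <= X](_ : _ = - mu * ye + r * dotv f y) //; field; rewrite gt_eqF.
Qed.

Lemma Gset_witness x y : enorm x <= enorm y -> dotv a x + dotv d y = -1 ->
  exists2 beta, Gset a d lam beta & dotv lam x <= dotv beta y.
Proof.
move=> xY Hxy.
have D_gt0 := hypH_enorm_gt0 Hxy.
have [y0|y0] := eqVneq y 0.
  have /eqP x0 : x == 0 by rewrite -enorm_eq0 eq_le enorm_ge0 -(enorm0 R m) -y0 xY.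
  by move: Hxy; rewrite x0 y0 !dotv0r addr0 => /eqP; rewrite eq_sym oppr_eq0 oner_eq0.
have [in_cap|outside_cap] := lerP (dotv d y) (- dotv a lam * enorm y).
  exists ((enorm y)^-1 *: y); first exact: Gset_normalize.
  rewrite dotvZl -enorm_sqr expr2 mulrA mulVf ?mul1r ?enorm_eq0 //.
  by apply: le_trans xY; apply: le_trans (dotv_le _ _) _; rewrite lam1 mul1r.
by apply: Gset_witness_outside_cap => //; rewrite Hxy lerN10.
Qed.

Lemma Gset_nondegenerate x y : enorm y < enorm x -> dotv a x + dotv d y = -1 ->
  dotv a ((enorm x)^-1 *: x) < enorm d.
Proof.
move=> yx Hxy; have x_gt0 : 0 < enorm x by apply: le_lt_trans yx; apply: enorm_ge0.
rewrite ltNge dotvZr; apply/negP; rewrite ler_pdivlMl // => xD.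
have := dotv_ge d y; have : 0 <= enorm d * (enorm x - enorm y).
  by rewrite mulr_ge0 ?enorm_ge0 // subr_ge0 ltW.
lra.
Qed.

End CapWitness.

Section Halfspace.
Variables (R : realType) (N : nat).

Lemma eopen_dotv_gt0 (w : 'rV[R]_N) : eopen [set q | 0 < dotv w q].
Proof.
move=> p /= wp.
have w0 : w != 0 by apply: contraTneq wp => ->; rewrite dotv0l ltxx.
have w_gt0 : 0 < enorm w by rewrite enorm_gt0.
exists (dotv w p / enorm w); first by rewrite divr_gt0.
move=> q /= qp; have := dotv_ge w (q - p).
have : enorm w * enorm (q - p) < dotv w p by rewrite mulrC -ltr_pdivlMr.
by rewrite dotvBr; lra.
Qed.

Lemma exists_ascent_in_hyperplane (w nv p : 'rV[R]_N) :
  w != 0 -> dotv nv p != 0 -> dotv w p = 0 -> exists v, dotv nv v = 0 /\ 0 < dotv w v.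
Proof.
move=> w0 nvp wp.
have nv0 : nv != 0 by apply: contraNneq nvp => ->; rewrite dotv0l.
set c := dotv w nv / dotv nv nv; set v := w - c *: nv.
have nv_v : dotv nv v = 0.
  by rewrite dotvBr dotvZr (dotvC nv w) mulfVK ?subrr // dotvv_eq0.
exists v; split=> //.
have -> : dotv w v = dotv v v.
  by rewrite -{1}(subrK (c *: nv) w) -/v dotvDl dotvZl nv_v mulr0 addr0.
rewrite dotvv_gt0; apply: contra_neq w0 => /subr0_eq w_nv.
have /eqP : c * dotv nv p = 0 by rewrite -dotvZl -w_nv.
by rewrite mulf_eq0 (negbTE nvp) orbF => /eqP c0; rewrite w_nv c0 scale0r.
Qed.

End Halfspace.

Section ConeSet.
Variables (R : realType) (n m : nat) (lam : 'rV[R]_n) (G : set 'rV[R]_m).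

Lemma C_GP p : C_G lam G p <-> forall beta, G beta -> dotv (cone_normal lam beta) p <= 0.
Proof. by split=> Cp beta /Cp; rewrite dotv_cone_normal. Qed.

Lemma C_G_notin p : ~ C_G lam G p ->
  exists2 beta, G beta & 0 < dotv (cone_normal lam beta) p.
Proof.
move/C_GP => notCp; apply: contra_notP notCp => none beta Gbeta.
by rewrite leNgt; apply/negP => wp; apply: none; exists beta.
Qed.

Lemma C_G_closed : eclosed (C_G lam G).
Proof.
move=> p /= /C_G_notin [beta Gbeta /eopen_dotv_gt0 [r r_gt0 ball_sub]].
exists r => // q /ball_sub /= wq /C_GP /(_ beta Gbeta).
by rewrite leNgt wq.
Qed.

Lemma C_G_convex : convex_set (C_G lam G).
Proof.
move=> p q t /C_GP Cp /C_GP Cq t_ge0 t_le1; apply/C_GP => beta Gbeta.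
have t1_ge0 : 0 <= 1 - t by rewrite subr_ge0.
rewrite !(dotvDr, dotvZr).
have := mulr_ge0_le0 t_ge0 (Cp beta Gbeta); have := mulr_ge0_le0 t1_ge0 (Cq beta Gbeta).
lra.
Qed.

Hypotheses (lam1 : enorm lam = 1) (G_unit : forall beta, G beta -> enorm beta = 1).

Lemma C_G_interior p delta : 0 < delta ->
  (forall beta, G beta -> dotv (cone_normal lam beta) p <= - delta) -> einterior (C_G lam G) p.
Proof.
move=> delta_gt0 wp; exists (delta / 2); first by rewrite divr_gt0.
move=> q /= qp; apply/C_GP => beta Gbeta.
have := dotv_cone_normal_le (q - p) lam1 (G_unit Gbeta).
by rewrite dotvBr; have := wp beta Gbeta; move: qp; rewrite /eball /=; lra.
Qed.

Lemma dotv_cone_normal_apex (b beta : 'rV[R]_m) s : enorm b = 1 -> enorm beta = 1 ->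
  dotv (cone_normal lam b) (row_mx (s *: lam) (s *: beta)) = - (s / 2) * dotv (b - beta) (b - beta).
Proof.
move=> /enorm_eq1 b1 /enorm_eq1 beta1; have /enorm_eq1 lam1' := lam1.
rewrite dotv_cone_normal row_mxKl row_mxKr !dotvZr lam1' !(dotvBl, dotvBr) b1 beta1 (dotvC beta b).
by field.
Qed.

Lemma dotv_cone_normal_shift (b beta : 'rV[R]_m) q :
  dotv (cone_normal lam b) q = dotv (cone_normal lam beta) q + dotv (b - beta) (rsubmx q).
Proof. by rewrite !dotv_cone_normal dotvBl addrACA subrr addr0. Qed.

Lemma C_G_shrink (beta : 'rV[R]_m) s th q z : enorm beta = 1 -> 0 < s -> 0 < th ->
  th * dotv (rsubmx q) (rsubmx q) <= s * dotv (cone_normal lam beta) q ->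
  enorm (z - row_mx (s *: lam) (s *: beta)) < th * dotv (cone_normal lam beta) q / 4 ->
  forall b, G b -> dotv (cone_normal lam b) z <= th * dotv (cone_normal lam b) q.
Proof.
move=> beta1 s_gt0 th_gt0 thY zp b Gb.
set p0 := row_mx _ _ in zp; set g := dotv (cone_normal lam beta) q in thY zp.
set Y2 := dotv (rsubmx q) (rsubmx q) in thY.
set delta := dotv (b - beta) (b - beta); set cross := dotv (b - beta) (rsubmx q).
have wz : dotv (cone_normal lam b) z <= - (s / 2) * delta + 2 * enorm (z - p0).
  have := dotv_cone_normal_le (z - p0) lam1 (G_unit Gb).
  by rewrite dotvBr (dotv_cone_normal_apex s (G_unit Gb) beta1) -/delta; lra.
(* AM-GM with weight s / th lets the curvature term - (s / 2) |b - beta|^2 absorb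
   the cross term. *)
have amgm : - ((s * delta + th * (th * Y2) / s) / 2) <= th * cross.
  rewrite [X in X <= _](_ : _ = th * - ((s / th * delta + Y2 / (s / th)) / 2)).
    by apply: ler_wpM2l; [exact: ltW | exact: dotv_ge_amgm (divr_gt0 s_gt0 th_gt0)].
  by field; rewrite !gt_eqF.
have : th * (th * Y2) / s <= th * g.
  by rewrite ler_pdivrMr // -mulrA ler_wpM2l ?(ltW th_gt0) // [g * s]mulrC.
rewrite (dotv_cone_normal_shift b beta q) -/g -/cross mulrDr; lra.
Qed.

Lemma C_G_hull_ball (C' : set 'rV[R]_(n + m)) (beta : 'rV[R]_m) s q :
  enorm beta = 1 -> 0 < s -> convex_set C' -> C_G lam G `<=` C' -> C' q ->
  0 < dotv (cone_normal lam beta) q ->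
  exists2 r, 0 < r & eball (row_mx (s *: lam) (s *: beta)) r `<=` C'.
Proof.
move=> beta1 s_gt0 cvx sub C'q; set g := dotv _ q => g_gt0.
set Y2 := dotv (rsubmx q) (rsubmx q); have Y2_ge0 : 0 <= Y2 := dotvv_ge0 _.
have sg_gt0 : 0 < s * g by rewrite mulr_gt0.
have den_gt0 : 0 < Y2 + s * g + 1 by lra.
set th := s * g / (Y2 + s * g + 1).
have th_gt0 : 0 < th by rewrite divr_gt0.
have th_lt1 : th < 1.
  by rewrite ltr_pdivrMr // mul1r; lra.
have thY : th * Y2 <= s * g.
  by rewrite mulrAC ler_pdivrMr // ler_pM2l //; lra.
exists (th * g / 4) => [|z zp]; first by rewrite divr_gt0 // mulr_gt0.
have th1_gt0 : 0 < 1 - th by rewrite subr_gt0.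
set c := (1 - th)^-1 *: (z - th *: q).
have Cc : C_G lam G c.
  apply/C_GP => b Gb; rewrite /c dotvZr dotvBr dotvZr pmulr_rle0 ?invr_gt0 // subr_le0.
  exact: (C_G_shrink beta1 s_gt0 th_gt0 thY zp).
have -> : z = (1 - th) *: c + (1 - (1 - th)) *: q.
  by rewrite /c scalerA mulfV ?gt_eqF // scale1r [1 - (1 - th)]subKr subrK.
apply: cvx => //; [exact: sub | lra | lra].
Qed.

End ConeSet.

Section SFree.
Variables (R : realType) (n m : nat) (a : 'rV[R]_n) (d : 'rV[R]_m) (lam : 'rV[R]_n).
Hypotheses (m_gt1 : (1 < m)%N) (ad : enorm a <= enorm d) (lam1 : enorm lam = 1).

Lemma hypHE p : hypH a d p <-> dotv (row_mx a d) p = -1.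
Proof. by rewrite dotv_row_mx. Qed.

Lemma C_G_S_free : S_free_wrt (hypH a d) (S_le0 a d) (C_G lam (Gset a d lam)).
Proof.
rewrite /S_free_wrt -subset0 => p [[Hp [[/C_GP Cp _] [rho rho_gt0 ball_sub]]] [[xy _] _]].
(* [p] lies on the boundary of the half-space of [beta]; moving within H along [v]
   leaves that half-space. *)
have [beta Gbeta ge] := Gset_witness m_gt1 ad lam1 xy Hp.
set w := cone_normal lam beta.
have wp : dotv w p = 0.
  by apply/le_anti; rewrite Cp //= dotv_cone_normal addrC subr_ge0.
have w0 : w != 0.
  by rewrite row_mx_eq0 negb_and oppr_eq0 -enorm_eq0 lam1 oner_eq0.
have /hypHE nvp := Hp.
have [|v [nv_v wv]] := exists_ascent_in_hyperplane (nv := row_mx a d) w0 _ wp.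
  by rewrite nvp oppr_eq0 oner_eq0.
set k := rho / (enorm v + 1).
have k_gt0 : 0 < k by rewrite divr_gt0 // ltr_pwDr ?enorm_ge0.
have [/C_GP Cq _] : (C_G lam (Gset a d lam) `&` hypH a d) (p + k *: v).
  apply: ball_sub; split; last by apply/hypHE; rewrite dotvDr dotvZr nv_v mulr0 addr0.
  rewrite /eball /= addrC addKr enormZ gtr0_norm // /k mulrAC ltr_pdivrMr ?ltr_pwDr ?enorm_ge0 //.
  by rewrite ltr_pM2l // ltrDl.
by have := Cq beta Gbeta; rewrite dotvDr dotvZr wp add0r leNgt mulr_gt0.
Qed.

End SFree.

Section GreatCircle.
Variables (R : realType) (N : nat).
Implicit Types (b w y : 'rV[R]_N) (k : R).

(* A rational parametrisation of the great circle through [b] towards [w]; unlike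
   normalisation, it needs no square roots. *)
Definition rot_toward b w k : 'rV[R]_N :=
  ((1 - k ^+ 2) / (1 + k ^+ 2)) *: b + (2 * k / (1 + k ^+ 2)) *: w.

Lemma enorm_rot_toward b w k : enorm b = 1 -> enorm w = 1 -> dotv b w = 0 ->
  enorm (rot_toward b w k) = 1.
Proof.
move=> /enorm_eq1 b1 /enorm_eq1 w1 bw; apply/enorm_eq1.
have k2_gt0 : 0 < 1 + k ^+ 2 by rewrite ltr_pwDl ?sqr_ge0.
rewrite !(dotvDl, dotvDr, dotvZl, dotvZr) b1 w1 bw (dotvC w b) bw.
by field; rewrite gt_eqF.
Qed.

Lemma dotv_rot_toward y b w k : dotv y (rot_toward b w k) =
  dotv y b + 2 * k * (dotv y w - k * dotv y b) / (1 + k ^+ 2).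
Proof.
have k2_gt0 : 0 < 1 + k ^+ 2 by rewrite ltr_pwDl ?sqr_ge0.
by rewrite dotvDr !dotvZr; field; rewrite gt_eqF.
Qed.

Lemma dotv_rot_toward_ge y b w k : enorm b = 1 -> enorm w = 1 -> 0 <= k -> k <= 1 ->
  dotv y b - 4 * k * enorm y <= dotv y (rot_toward b w k).
Proof.
move=> b1 w1 k_ge0 k_le1; set Y := enorm y.
have k2_gt0 : 0 < 1 + k ^+ 2 by rewrite ltr_pwDl ?sqr_ge0.
have Y_ge0 : 0 <= Y := enorm_ge0 y.
have yw : - Y <= dotv y w by have := dotv_ge y w; rewrite w1 mulr1.
have kyb : k * dotv y b <= Y.
  apply: le_trans (ler_piMl Y_ge0 k_le1).
  by rewrite ler_wpM2l //; have := dotv_le y b; rewrite b1 mulr1.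
have : 2 * k * (- (2 * Y)) <= 2 * k * (dotv y w - k * dotv y b).
  by rewrite ler_wpM2l ?mulr_ge0 //; lra.
have : 4 * k * Y <= 4 * k * Y * (1 + k ^+ 2).
  by rewrite ler_peMr ?mulr_ge0 ?lerDl ?sqr_ge0.
rewrite dotv_rot_toward lerD2l ler_pdivlMr //; lra.
Qed.

End GreatCircle.

Section CapInterior.
Variables (R : realType) (m : nat) (d : 'rV[R]_m) (mu : R).
Hypothesis m_gt1 : (1 < m)%N.
Implicit Types (b w y : 'rV[R]_m) (k : R).

Lemma exists_tangent_descent b : 0 < enorm d -> mu < enorm d -> enorm b = 1 ->
  dotv d b = - mu ->
  exists w, [/\ enorm w = 1, dotv b w = 0 & dotv d w < 0 \/ dotv d w = 0 /\ mu < 0].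
Proof.
move=> D_gt0 muD b1 db; have /enorm_eq1 bb := b1.
set w0 := - d - mu *: b.
have bw0 : dotv b w0 = 0 by rewrite dotvBr dotvNr dotvZr bb dotvC db; lra.
have dw0 : dotv d w0 = - dotv w0 w0.
  by rewrite !(dotvBl, dotvBr, dotvNl, dotvNr, dotvZl, dotvZr) bb (dotvC b d) db; ring.
have [w0_0|w0_n0] := eqVneq w0 0.
  have [w [w1 bw]] := exists_unit_orthogonal b m_gt1.
  have d_mub : d = - mu *: b.
    by apply/eqP; rewrite -subr_eq0 scaleNr opprK -oppr_eq0 opprD -/w0 w0_0.
  exists w; split=> //; right; split; first by rewrite d_mub dotvZl bw mulr0.
  move: muD; rewrite d_mub enormZ normrN b1 mulr1.
  by rewrite ltr_normr ltxx /=; lra.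
exists ((enorm w0)^-1 *: w0); split; first exact: enorm_normalize.
  by rewrite dotvZr bw0 mulr0.
by left; rewrite dotvZr dw0 mulrN oppr_lt0 mulr_gt0 ?invr_gt0 ?dotvv_gt0 ?enorm_gt0.
Qed.

Lemma exists_slope_descent w : dotv d w < 0 \/ dotv d w = 0 /\ mu < 0 ->
  exists2 c, 0 < c & forall k, 0 < k -> k <= c -> k * mu + dotv d w < 0.
Proof.
case=> [dw_lt0 | [-> mu_lt0]]; last by exists 1 => // k k_gt0 _; rewrite addr0 pmulr_rlt0.
have mu1_gt0 : 0 < `|mu| + 1 by rewrite ltr_pwDr.
exists (- dotv d w / (`|mu| + 1)); first by rewrite divr_gt0 ?oppr_gt0.
move=> k k_gt0; rewrite ler_pdivlMr // mulrDr mulr1 => kc.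
have : k * mu <= k * `|mu| by rewrite ler_wpM2l ?(ltW k_gt0) ?ler_norm.
lra.
Qed.

Lemma cap_interior_approx b0 y s : 0 < enorm d -> mu < enorm d -> enorm b0 = 1 ->
  mu + dotv d b0 <= 0 -> s < dotv b0 y ->
  exists b, [/\ enorm b = 1, mu + dotv d b < 0 & s < dotv b y].
Proof.
move=> D_gt0 muD b1 db0 sb0.
have [in_cap|on_edge] := ltrP (mu + dotv d b0) 0; first by exists b0.
have db : dotv d b0 = - mu by apply/le_anti/andP; split; lra.
have [w [w1 bw /exists_slope_descent [c c_gt0 c_ok]]] := exists_tangent_descent D_gt0 muD b1 db.
set g := dotv b0 y - s; set Y := enorm y.
have Y1_gt0 : 0 < 4 * Y + 1 by rewrite ltr_pwDr ?mulr_ge0 ?enorm_ge0.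
have gY_gt0 : 0 < g / (4 * Y + 1) by rewrite divr_gt0 ?subr_gt0.
set k := Num.min 1 (Num.min (g / (4 * Y + 1)) c).
have k_gt0 : 0 < k by rewrite !lt_min ltr01 c_gt0 gY_gt0.
have k_le1 : k <= 1 by rewrite ge_min lexx.
have k_le_gY : k <= g / (4 * Y + 1) by rewrite !ge_min lexx orbT.
have k_le_c : k <= c by rewrite !ge_min lexx !orbT.
exists (rot_toward b0 w k); split; first exact: enorm_rot_toward.
  have k2_gt0 : 0 < 1 + k ^+ 2 by rewrite ltr_pwDl ?sqr_ge0.
  rewrite dotv_rot_toward db addNKr mulrN opprK pmulr_llt0 ?invr_gt0 //.
  by rewrite pmulr_rlt0 ?mulr_gt0 // addrC c_ok.
rewrite dotvC; apply: lt_le_trans (dotv_rot_toward_ge y b1 w1 (ltW k_gt0) k_le1).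
move: k_le_gY; rewrite ler_pdivlMr // mulrDr mulr1.
by rewrite -/Y (dotvC y b0) /g; lra.
Qed.

End CapInterior.

Section Maximality.
Variables (R : realType) (n m : nat) (a : 'rV[R]_n) (d : 'rV[R]_m) (lam : 'rV[R]_n).
Hypotheses (m_gt1 : (1 < m)%N) (lam1 : enorm lam = 1).
Hypotheses (D_gt0 : 0 < enorm d) (mu_lt_D : dotv a lam < enorm d).

Lemma C_G_maximal (C' : set 'rV[R]_(n + m)) :
  convex_set C' -> C_G lam (Gset a d lam) `<=` C' -> S_free_wrt (hypH a d) (S_le0 a d) C' ->
  C' `&` hypH a d `<=` C_G lam (Gset a d lam) `&` hypH a d.
Proof.
move=> cvx sub free q [C'q Hq]; split=> //.
have [//|/C_G_notin [b0 [b0_1 b0_cap] b0q]] := pselect (C_G lam (Gset a d lam) q).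
rewrite dotv_cone_normal addrC subr_gt0 in b0q.
have [b [b1 b_cap bq]] := cap_interior_approx m_gt1 D_gt0 mu_lt_D b0_1 b0_cap b0q.
have Gunit beta : Gset a d lam beta -> enorm beta = 1 by case.
have wbq : 0 < dotv (cone_normal lam b) q by rewrite dotv_cone_normal addrC subr_gt0.
(* The ray through (lam, b) meets H at k (lam, b), a point of S. *)
set k := (- (dotv a lam + dotv d b))^-1.
have k_gt0 : 0 < k by rewrite invr_gt0 oppr_gt0.
have [r r_gt0 ball_sub] := C_G_hull_ball lam1 Gunit b1 k_gt0 cvx sub C'q wbq.
set p0 := row_mx (k *: lam) (k *: b) in ball_sub.
have Hp0 : hypH a d p0.
  by rewrite /hypH /= row_mxKl row_mxKr !dotvZr -mulrDr /k invrN mulNr mulVf ?lt_eqF.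
have Sp0 : S_le0 a d p0.
  split; last by rewrite Hp0 lerN10.
  by rewrite /p0 row_mxKl row_mxKr !enormZ lam1 b1.
have : (rel_interior (hypH a d) (C' `&` hypH a d) `&` (S_le0 a d `&` hypH a d)) p0.
  split=> //; split=> //; split; last by exists r => // z [/ball_sub C'z Hz].
  by split=> //; apply: ball_sub; rewrite /eball /= subrr enorm0.
by rewrite free.
Qed.

End Maximality.

Theorem theorem8 (R : realType) (n m : nat) (a : 'rV[R]_n) (d : 'rV[R]_m)
  (xb : 'rV[R]_n) (yb : 'rV[R]_m) :
  (1 <= n)%N -> (1 < m)%N ->
  enorm a <= enorm d ->
  enorm yb < enorm xb ->
  dotv a xb + dotv d yb = -1 ->
  let lam := (enorm xb)^-1 *: xb in
  let C := C_G lam (Gset a d lam) in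
  maximal_S_free_wrt (hypH a d) (S_le0 a d) C /\ einterior C (row_mx xb yb).
Proof.
move=> _ m_gt1 ad yx Hxy lam C.
have x_gt0 : 0 < enorm xb by apply: le_lt_trans yx; apply: enorm_ge0.
have lam1 : enorm lam = 1 by apply: enorm_normalize; rewrite -enorm_gt0.
have Gunit beta : Gset a d lam beta -> enorm beta = 1 by case.
split; last first.
  have gap : 0 < enorm xb - enorm yb by rewrite subr_gt0.
  apply: (C_G_interior lam1 Gunit gap) => beta /Gunit beta1.
  rewrite dotv_cone_normal row_mxKl row_mxKr dotvZl -enorm_sqr expr2 mulKf ?gt_eqF //.
  by have := dotv_le beta yb; rewrite beta1 mul1r; lra.
split; [exact: C_G_closed | exact: C_G_convex | exact: C_G_S_free |].
move=> C' _ cvx sub free; apply: C_G_maximal => //.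
- exact: hypH_enorm_gt0 Hxy.
- exact: Gset_nondegenerate Hxy.
Qed.
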